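(* Let $d\ge 1$, $\gamma>0$, and let $f_I\in C^1(\mathbb{R}^d)\cap L^\infty(\mathbb{R}^d)$ be nonnegative, not identically zero, radially symmetric and radially non-increasing (i.e. $f_I(x)=\tilde f_I(|x|)$ with $\tilde f_I$ non-increasing on $[0,\infty)$). Set $t^*=\bigl(\gamma d\,\max f_I^\gamma\bigr)^{-1}$. Then there exists a classical solution $\rho\in C^1(\mathbb{R}^d\times[0,t^* ))$ of $$\partial_t\rho-(1+\gamma)\rho^{\gamma}\,x\cdot\nabla\rho=d\,\rho^{1+\gamma},\qquad \rho(x,0)=f_I(x),$$ (equivalently of $\partial_t\rho-\nabla\cdot(x\rho^{1+\gamma})=0$), given along characteristics by $\rho\bigl(x_0(1-\gamma d f_I^\gamma(x_0)t)^{(1+\gamma)/(\gamma d)},t\bigr)=f_I(x_0)\,(1-\gamma d f_I^\gamma(x_0)t)^{-1/\gamma}$, and this solution blows up at the origin at time $t^*$: $$\lim_{(x,t)\to(0,t^* )}\rho(x,t)=+\infty .$$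
   Context: The parameter $\gamma>0$ is fixed. This concerns the equation $\partial_t\rho-\nabla\cdot(x\rho^{1+\gamma})=0$ on $\mathbb{R}^d\times[0,\infty)$, written in non-conservative form for smooth solutions. *)

From Stdlib Require Import Reals Lra Arith.
Open Scope R_scope.

(* Points of R^d are represented as functions nat -> R; only the
   coordinates i < d are meaningful (all notions below only look at them). *)
Definition vec := nat -> R.

Fixpoint sumR (d : nat) (f : nat -> R) : R :=
  match d with
  | O => 0
  | S k => sumR k f + f k
  end.

Definition dot (d : nat) (x y : vec) : R := sumR d (fun i => x i * y i).
Definition normd (d : nat) (x : vec) : R := sqrt (dot d x x).
Definition vsub (x y : vec) : vec := fun i => x i - y i.
Definition vscal (c : R) (x : vec) : vec := fun i => c * x i.

Definition upd (x : vec) (i : nat) (h : R) : vec :=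
  fun j => if Nat.eqb j i then x j + h else x j.

(* real power with the convention 0^a = 0 (used for a > 0 only) *)
Definition rpow (x a : R) : R :=
  if Rlt_dec 0 x then Rpower x a else 0.

Definition cont_Rd (d : nat) (F : vec -> R) (x : vec) : Prop :=
  forall eps, 0 < eps -> exists delta, 0 < delta /\
    forall y, normd d (vsub y x) < delta -> Rabs (F y - F x) < eps.

Definition C1_Rd (d : nat) (F : vec -> R) : Prop :=
  exists DF : nat -> vec -> R,
    (forall x, cont_Rd d F x) /\
    (forall i, (i < d)%nat -> forall x,
        derivable_pt_lim (fun h => F (upd x i h)) 0 (DF i x) /\
        cont_Rd d (DF i) x).

Definition cont_strip (d : nat) (T : R) (G : vec -> R -> R) (x : vec) (t : R) : Prop :=
  forall eps, 0 < eps -> exists delta, 0 < delta /\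
    forall y s, 0 <= s < T -> normd d (vsub y x) < delta -> Rabs (s - t) < delta ->
      Rabs (G y s - G x t) < eps.

Definition C1_strip (d : nat) (T : R) (rho rho_t : vec -> R -> R)
    (rho_x : nat -> vec -> R -> R) : Prop :=
  (forall x t, 0 <= t < T ->
     cont_strip d T rho x t /\ cont_strip d T rho_t x t /\
     (forall i, (i < d)%nat -> cont_strip d T (rho_x i) x t)) /\
  (forall x t, 0 < t < T -> derivable_pt_lim (fun s => rho x s) t (rho_t x t)) /\
  (forall x t i, 0 <= t < T -> (i < d)%nat ->
     derivable_pt_lim (fun h => rho (upd x i h) t) 0 (rho_x i x t)).

From Stdlib Require Import Reals Lra Lia.
From Stdlib Require Import ClassicalEpsilon FunctionalExtensionality.
Open Scope R_scope.

(** The solution is built by characteristics on the radial profile.  Writing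
    the datum as [f_I(x) = G(|x|)], the characteristic issued from radius [u]
    is compressed by the factor [A(u,t) = 1 − γ d G(u)^γ t]: it reaches the
    radius [Phi(u,t) = u A^p], [p = (1+γ)/(γ d)], carrying the value
    [Ech(u,t) = G(u) A^{-1/γ}].  For [0 <= t < t*] we have [A >= Amin(t) > 0]
    and, because [G] is radially non-increasing, [u ↦ Phi(u,t)] has all its
    slopes [>= Amin(t)^p]; hence it is a homeomorphism with a jointly
    continuous inverse [psi], and [radial(r,t) = Ech(psi(r,t),t)] is the
    radial profile of [ρ(x,t) = radial(|x|,t)]. *)

Lemma continuity_pt_eps f x eps : continuity_pt f x -> 0 < eps ->
  exists del, 0 < del /\ forall y, Rabs (y - x) < del -> Rabs (f y - f x) < eps.
Proof.
  intros H He. destruct (H eps He) as [al [Hal Hf]].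
  exists al; split; [lra|]. intros y Hy.
  destruct (Req_dec y x) as [->|Hne].
  - rewrite Rminus_diag, Rabs_R0; lra.
  - apply (Hf y). split; [split; [exact I| auto] | exact Hy].
Qed.

Lemma continuity_pt_of_eps f x :
  (forall eps, 0 < eps -> exists del, 0 < del /\ forall y, Rabs (y - x) < del -> Rabs (f y - f x) < eps) ->
  continuity_pt f x.
Proof.
  intros H e He. destruct (H e He) as [d [Hd K]]. exists d; split; [lra|].
  intros y [_ Hy]. apply K. exact Hy.
Qed.

Lemma derive_local f g x l :
  (exists del, 0 < del /\ forall y, Rabs (y - x) < del -> f y = g y) ->
  derivable_pt_lim f x l -> derivable_pt_lim g x l.
Proof.
  intros [del [Hdel E]]. apply (derivable_pt_lim_locally_ext f g x (x - del) (x + del)); [lra|].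
  intros z Hz. apply E. apply Rabs_def1; lra.
Qed.

Lemma derive_nonpos_of_right f x l del : 0 < del -> derivable_pt_lim f x l ->
  (forall h, 0 < h < del -> f (x + h) <= f x) -> l <= 0.
Proof.
  intros Hdel H Hm. destruct (Rle_lt_dec l 0) as [|Hl]; auto. exfalso.
  destruct (H l Hl) as [d Hd].
  set (h := Rmin (d/2) (del/2)).
  assert (Hh : 0 < h) by (apply Rmin_pos; generalize (cond_pos d); lra).
  assert (Hh1 : h <= d/2) by apply Rmin_l. assert (Hh2 : h <= del/2) by apply Rmin_r.
  specialize (Hd h ltac:(lra)). rewrite Rabs_pos_eq in Hd by lra.
  specialize (Hd ltac:(generalize (cond_pos d); lra)).
  assert ((f (x + h) - f x) / h <= 0).
  { unfold Rdiv. assert (0 < / h) by (apply Rinv_0_lt_compat; lra).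
    specialize (Hm h ltac:(lra)). nra. }
  apply Rabs_def2 in Hd. lra.
Qed.

Lemma derive_mult_flat f g u B : f u = 0 -> derivable_pt_lim f u 0 ->
  (forall y, Rabs (g y) <= B) -> derivable_pt_lim (fun y => f y * g y) u 0.
Proof.
  intros Hf0 Hf Hg e He. set (B' := Rabs B + 1).
  assert (HB' : 0 < B') by (unfold B'; generalize (Rabs_pos B); lra).
  destruct (Hf (e / B') ltac:(apply Rdiv_lt_0_compat; auto)) as [d K].
  exists d. intros h Hh0 Hh. specialize (K h Hh0 Hh).
  rewrite Hf0, !Rminus_0_r in *. rewrite Rmult_0_l, Rminus_0_r.
  replace (f (u + h) * g (u + h) / h) with (f (u + h) / h * g (u + h)) by (field; auto).
  rewrite Rabs_mult. apply Rle_lt_trans with (Rabs (f (u + h) / h) * B').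
  - apply Rmult_le_compat_l; [apply Rabs_pos|]. unfold B'. generalize (Hg (u + h)) (Rle_abs B); lra.
  - apply Rmult_lt_reg_r with (/ B'); [apply Rinv_0_lt_compat; auto|].
    rewrite Rmult_assoc, Rinv_r, Rmult_1_r by lra. exact K.
Qed.

Lemma derive_abs_flat f : derivable_pt_lim f 0 0 -> derivable_pt_lim (fun h => f (Rabs h)) 0 0.
Proof.
  intros H e He. destruct (H e He) as [del K]. exists del. intros h Hh0 Hh.
  specialize (K (Rabs h) ltac:(apply Rabs_no_R0; auto) ltac:(rewrite Rabs_Rabsolu; auto)).
  rewrite !Rplus_0_l, Rabs_R0 in *. rewrite Rminus_0_r in *.
  destruct (Rle_lt_dec 0 h) as [Hp|Hp].
  - rewrite (Rabs_pos_eq h) in * by lra. auto.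
  - rewrite (Rabs_left h) in * by lra. unfold Rdiv in *.
    rewrite Rinv_opp, <- Ropp_mult_distr_r, Rabs_Ropp in K. auto.
Qed.

Lemma MVT_between (f f' : R -> R) a b : (forall c, derivable_pt_lim f c (f' c)) ->
  exists xi, Rabs (xi - a) <= Rabs (b - a) /\ f b - f a = f' xi * (b - a).
Proof.
  intros Hd. destruct (Rtotal_order a b) as [Hab|[Hab|Hab]].
  - destruct (MVT_cor2 f f' a b Hab (fun c _ => Hd c)) as [xi [E Hxi]].
    exists xi. split; auto. rewrite !Rabs_pos_eq by lra. lra.
  - subst. exists b. rewrite !Rminus_diag, Rabs_R0. split; [lra| ring].
  - destruct (MVT_cor2 f f' b a Hab (fun c _ => Hd c)) as [xi [E Hxi]].
    exists xi. split. rewrite !Rabs_left by lra. lra. lra.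
Qed.

(** * Joint continuity on [X × [0,T)]

    For a distance-like function [dist] on a set [X], [cont_within dist T F x t]
    says that [F] is continuous at [(x,t)] as a function on [X × [0,T)].  With
    the Euclidean distance of R^d it is literally [cont_strip]; with [Rdist]
    it is continuity on the half-strip [R × [0,T)]. *)
Section JointContinuity.
Context {X : Type} (dist : X -> X -> R) (T : R).

Definition cont_within (F : X -> R -> R) (x : X) (t : R) : Prop :=
  forall eps, 0 < eps -> exists delta, 0 < delta /\
    forall y s, 0 <= s < T -> dist y x < delta -> Rabs (s - t) < delta ->
      Rabs (F y s - F x t) < eps.

Lemma cont_within_const c x t : cont_within (fun _ _ => c) x t.
Proof. intros e He; exists 1; split; [lra|]; intros; rewrite Rminus_diag, Rabs_R0; lra. Qed.

Lemma cont_within_time x t : cont_within (fun _ s => s) x t.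
Proof. intros e He; exists e; split; [lra|]; intros; auto. Qed.

Lemma cont_within_ext F1 F2 x t :
  (forall y s, F1 y s = F2 y s) -> cont_within F1 x t -> cont_within F2 x t.
Proof.
  intros E H e He. destruct (H e He) as [d [Hd K]]. exists d; split; auto.
  intros. rewrite <- !E; auto.
Qed.

Lemma cont_within_plus F1 F2 x t : cont_within F1 x t -> cont_within F2 x t ->
  cont_within (fun y s => F1 y s + F2 y s) x t.
Proof.
  intros H1 H2 e He. destruct (H1 (e/2) ltac:(lra)) as [d1 [Hd1 K1]].
  destruct (H2 (e/2) ltac:(lra)) as [d2 [Hd2 K2]].
  exists (Rmin d1 d2); split; [apply Rmin_pos; lra|]. intros y s Hs Hy Ht.
  generalize (Rmin_l d1 d2) (Rmin_r d1 d2); intros.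
  specialize (K1 y s Hs ltac:(lra) ltac:(lra)). specialize (K2 y s Hs ltac:(lra) ltac:(lra)).
  replace (F1 y s + F2 y s - (F1 x t + F2 x t))
    with ((F1 y s - F1 x t) + (F2 y s - F2 x t)) by ring.
  eapply Rle_lt_trans; [apply Rabs_triang|]. lra.
Qed.

Lemma cont_within_comp (f : R -> R) F x t : continuity_pt f (F x t) ->
  cont_within F x t -> cont_within (fun y s => f (F y s)) x t.
Proof.
  intros Hf HF e He. destruct (continuity_pt_eps f _ e Hf He) as [d1 [Hd1 K1]].
  destruct (HF d1 Hd1) as [d2 [Hd2 K2]]. exists d2; split; auto.
Qed.

Lemma cont_within_opp F x t : cont_within F x t -> cont_within (fun y s => - F y s) x t.
Proof. apply (cont_within_comp Ropp). reg. Qed.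

Lemma cont_within_minus F1 F2 x t : cont_within F1 x t -> cont_within F2 x t ->
  cont_within (fun y s => F1 y s - F2 y s) x t.
Proof. intros. apply cont_within_plus; [|apply cont_within_opp]; auto. Qed.

(** Products, by polarization: [ab = ((a+b)² - (a-b)²)/4]. *)
Lemma cont_within_mult F1 F2 x t : cont_within F1 x t -> cont_within F2 x t ->
  cont_within (fun y s => F1 y s * F2 y s) x t.
Proof.
  intros H1 H2. set (q := fun z : R => z * z / 4).
  assert (Hq : forall z, continuity_pt q z) by (intro; unfold q; reg).
  apply cont_within_ext with
    (fun y s => q (F1 y s + F2 y s) - q (F1 y s - F2 y s)); [intros; unfold q; field|].
  apply cont_within_minus; apply cont_within_comp; auto.
  - apply cont_within_plus; auto.
  - apply cont_within_minus; auto.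
Qed.

Lemma cont_within_inv F x t : F x t <> 0 -> cont_within F x t ->
  cont_within (fun y s => / F y s) x t.
Proof. intros HF. apply (cont_within_comp Rinv). apply continuity_pt_inv; [reg | auto]. Qed.

Lemma cont_within_local F1 F2 x t : dist x x = 0 ->
  (exists eta, 0 < eta /\ forall y s, dist y x < eta -> F1 y s = F2 y s) ->
  cont_within F2 x t -> cont_within F1 x t.
Proof.
  intros H0 [eta [Heta E]] H e He. destruct (H e He) as [del [Hd K]].
  exists (Rmin del eta); split; [apply Rmin_pos; lra|]. intros y s Hs Hy Ht.
  generalize (Rmin_l del eta) (Rmin_r del eta); intros.
  rewrite (E y s), (E x t) by lra. apply K; auto; lra.
Qed.

End JointContinuity.

Lemma cont_within_subst {X} (dist : X -> X -> R) T (psi : X -> R -> R) (F : R -> R -> R) x t :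
  cont_within dist T psi x t -> cont_within Rdist T F (psi x t) t ->
  cont_within dist T (fun y s => F (psi y s) s) x t.
Proof.
  intros Hp HF e He. destruct (HF e He) as [d1 [Hd1 K1]].
  destruct (Hp d1 Hd1) as [d2 [Hd2 K2]]. exists (Rmin d1 d2); split; [apply Rmin_pos; lra|].
  intros y s Hs Hy Ht. generalize (Rmin_l d1 d2) (Rmin_r d1 d2); intros.
  apply K1; auto; [apply K2|]; lra.
Qed.

Lemma cont_within_dominated {X} (dist : X -> X -> R) T (F g : X -> R -> R) x t B :
  F x t = 0 -> g x t = 0 -> cont_within dist T g x t ->
  (exists del, 0 < del /\ forall y s, 0 <= s < T -> dist y x < del -> Rabs (s - t) < del ->
     Rabs (F y s) <= B * Rabs (g y s)) ->
  cont_within dist T F x t.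
Proof.
  intros HF Hg Hc [del [Hdel Hdom]] e He. set (B' := Rabs B + 1).
  assert (HB' : 0 < B') by (unfold B'; generalize (Rabs_pos B); lra).
  destruct (Hc (e / B') ltac:(apply Rdiv_lt_0_compat; auto)) as [d [Hd K]].
  exists (Rmin d del); split; [apply Rmin_pos; lra|]. intros y s Hs Hy Ht.
  generalize (Rmin_l d del) (Rmin_r d del); intros.
  specialize (K y s Hs ltac:(lra) ltac:(lra)). specialize (Hdom y s Hs ltac:(lra) ltac:(lra)).
  rewrite HF, Rminus_0_r. rewrite Hg, Rminus_0_r in K.
  apply Rle_lt_trans with (B' * Rabs (g y s)).
  - eapply Rle_trans; [apply Hdom|]. apply Rmult_le_compat_r; [apply Rabs_pos|].
    unfold B'. generalize (Rle_abs B); lra.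
  - apply Rmult_lt_reg_l with (/ B'); [apply Rinv_0_lt_compat; auto|].
    rewrite <- Rmult_assoc, Rinv_l, Rmult_1_l by lra. unfold Rdiv in K. lra.
Qed.

Lemma cont_within_space T u t : cont_within Rdist T (fun v _ => v) u t.
Proof. intros e He; exists e; split; [lra|]; intros; auto. Qed.

Lemma cont_within_space_fun T f u t : continuity_pt f u ->
  cont_within Rdist T (fun v _ => f v) u t.
Proof. intro. apply (cont_within_comp _ _ f (fun v _ => v)); auto. apply cont_within_space. Qed.

Lemma continuity_pt_of_within T F u t : 0 <= t < T -> cont_within Rdist T F u t ->
  continuity_pt (fun v => F v t) u.
Proof.
  intros Ht H e He. destruct (H e He) as [d [Hd K]]. exists d; split; [lra|].
  intros y [_ Hy]. apply K; auto. rewrite Rminus_diag, Rabs_R0; auto.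
Qed.

(** * Real powers *)

Lemma Rpower_pos x a : 0 < Rpower x a.
Proof. apply exp_pos. Qed.

Lemma Rpower_base1 a : Rpower 1 a = 1.
Proof. unfold Rpower. rewrite ln_1, Rmult_0_r. apply exp_0. Qed.

Lemma Rpower_le1 x a : 0 < x <= 1 -> 0 <= a -> Rpower x a <= 1.
Proof. intros. rewrite <- (Rpower_base1 a). apply Rle_Rpower_l; lra. Qed.

Lemma Rpower_nonincr x y a : 0 < x <= y -> a <= 0 -> Rpower y a <= Rpower x a.
Proof.
  intros. replace a with (- (- a)) by ring. rewrite (Rpower_Ropp x (-a)), (Rpower_Ropp y (-a)).
  assert (Rpower x (-a) <= Rpower y (-a)) by (apply Rle_Rpower_l; lra).
  generalize (Rpower_pos x (-a)); intro. apply Rinv_le_contravar; lra.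
Qed.

Lemma Rpower_minus1 x a : 0 < x -> Rpower x (a - 1) = Rpower x a / x.
Proof. intro. unfold Rminus. rewrite Rpower_plus, Rpower_Ropp, Rpower_1; auto. Qed.

Lemma derive_Rpower_affine k s a : 0 < 1 - k * s ->
  derivable_pt_lim (fun s => Rpower (1 - k * s) a) s (a * Rpower (1 - k * s) (a - 1) * (- k)).
Proof.
  intro H. apply (derivable_pt_lim_comp (fun s => 1 - k * s) (fun y => Rpower y a) s (-k)).
  - replace (-k) with (0 - k * 1) by ring.
    apply derivable_pt_lim_minus; [apply derivable_pt_lim_const|].
    apply derivable_pt_lim_scal, derivable_pt_lim_id.
  - apply derivable_pt_lim_power; auto.
Qed.

Lemma continuity_pt_Rpower x a : 0 < x -> continuity_pt (fun y => Rpower y a) x.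
Proof. intro. apply derivable_continuous_pt. eexists. apply derivable_pt_lim_power; auto. Qed.

Lemma rpow_pos x a : 0 < x -> rpow x a = Rpower x a.
Proof. intro H. unfold rpow. destruct (Rlt_dec 0 x); [auto| lra]. Qed.

Lemma rpow_nonpos x a : x <= 0 -> rpow x a = 0.
Proof. intro H. unfold rpow. destruct (Rlt_dec 0 x); [lra| auto]. Qed.

Lemma rpow_ge0 x a : 0 <= rpow x a.
Proof. unfold rpow. destruct (Rlt_dec 0 x); [left; apply Rpower_pos| lra]. Qed.

Lemma rpow_mono x y a : 0 <= x <= y -> 0 <= a -> rpow x a <= rpow y a.
Proof.
  intros. destruct (Rlt_dec 0 x).
  - rewrite !rpow_pos by lra. apply Rle_Rpower_l; lra.
  - rewrite (rpow_nonpos x) by lra. apply rpow_ge0.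
Qed.

Lemma continuity_pt_rpow x a : 0 < a -> continuity_pt (fun y => rpow y a) x.
Proof.
  intro Ha. destruct (Rtotal_order x 0) as [Hx|[->|Hx]].
  - apply continuity_pt_locally_ext with (fun _ => 0) (-x); [lra| |reg].
    intros y Hy. unfold Rdist in Hy. apply Rabs_def2 in Hy. rewrite rpow_nonpos; lra.
  - intros e He. exists (Rpower e (/ a)); split; [apply Rpower_pos|].
    intros y [_ Hy]. simpl in *. unfold Rdist in *. rewrite Rminus_0_r in Hy.
    rewrite (rpow_nonpos 0), Rminus_0_r, Rabs_pos_eq by (try apply rpow_ge0; lra).
    destruct (Rlt_le_dec 0 y).
    + rewrite rpow_pos by auto. rewrite Rabs_pos_eq in Hy by lra.
      apply Rlt_le_trans with (Rpower (Rpower e (/ a)) a).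
      * apply Rlt_Rpower_l; auto.
      * rewrite Rpower_mult, Rinv_l, Rpower_1; lra.
    + rewrite rpow_nonpos; auto.
  - apply continuity_pt_locally_ext with (fun y => Rpower y a) x; [lra| |apply continuity_pt_Rpower; auto].
    intros y Hy. unfold Rdist in Hy. apply Rabs_def2 in Hy. rewrite rpow_pos; auto. lra.
Qed.

(** * Finite sums and the Euclidean norm of R^d *)

Lemma sumR_ext d f g : (forall i, (i < d)%nat -> f i = g i) -> sumR d f = sumR d g.
Proof. induction d; simpl; intros; auto. rewrite IHd, H by (intros; try apply H; lia). auto. Qed.

Lemma sumR_scal d c f : sumR d (fun i => c * f i) = c * sumR d f.
Proof. induction d; simpl. ring. rewrite IHd. ring. Qed.

Lemma sumR_zero d f : (forall i, (i < d)%nat -> f i = 0) -> sumR d f = 0.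
Proof. induction d; simpl; intros; auto. rewrite IHd, H by (intros; try apply H; lia). ring. Qed.

Lemma sumR_nonneg d f : (forall i, (i < d)%nat -> 0 <= f i) -> 0 <= sumR d f.
Proof.
  induction d; simpl; intros; [lra|].
  assert (0 <= f d) by (apply H; lia). assert (0 <= sumR d f) by (apply IHd; intros; apply H; lia). lra.
Qed.

Lemma sumR_term d f i : (forall j, (j < d)%nat -> 0 <= f j) -> (i < d)%nat -> f i <= sumR d f.
Proof.
  induction d; simpl; intros Hf Hi; [lia|].
  assert (0 <= f d) by (apply Hf; lia).
  destruct (Nat.eq_dec i d) as [->|Hne].
  - assert (0 <= sumR d f) by (apply sumR_nonneg; intros; apply Hf; lia). lra.
  - assert (f i <= sumR d f) by (apply IHd; [intros; apply Hf; lia| lia]). lra.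
Qed.

Definition distd (d : nat) (y x : vec) : R := normd d (vsub y x).

Lemma dot_nonneg d x : 0 <= dot d x x.
Proof. apply sumR_nonneg. intros. apply Rle_0_sqr. Qed.

Lemma normd_nonneg d x : 0 <= normd d x.
Proof. apply sqrt_pos. Qed.

Lemma normd_sq d x : normd d x * normd d x = dot d x x.
Proof. apply sqrt_sqrt, dot_nonneg. Qed.

Lemma distd_self d x : distd d x x = 0.
Proof. unfold distd, normd, dot, vsub. rewrite sumR_zero. apply sqrt_0. intros; ring. Qed.

Lemma dot_upd d x i h : (i < d)%nat ->
  dot d (upd x i h) (upd x i h) = dot d x x + 2 * h * x i + h * h.
Proof.
  unfold dot, upd. induction d; intros Hi; simpl; [lia|].
  destruct (Nat.eq_dec i d) as [->|Hne].
  - rewrite Nat.eqb_refl, (sumR_ext d _ (fun j => x j * x j)); [ring|].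
    intros j Hj. destruct (Nat.eqb_spec j d); [lia| auto].
  - rewrite IHd by lia. destruct (Nat.eqb_spec d i); [lia| ring].
Qed.

Lemma coord_le d x i : (i < d)%nat -> Rabs (x i) <= normd d x.
Proof.
  intros Hi. unfold normd. rewrite <- sqrt_Rsqr_abs. apply sqrt_le_1_alt.
  apply (sumR_term d (fun j => x j * x j)); auto. intros; apply Rle_0_sqr.
Qed.

Lemma normd_upd_origin d x i h : normd d x = 0 -> (i < d)%nat -> normd d (upd x i h) = Rabs h.
Proof.
  intros H Hi. unfold normd at 1. rewrite dot_upd, <- normd_sq, H by auto.
  assert (x i = 0).
  { generalize (coord_le d x i Hi). rewrite H. intro. destruct (Req_dec (x i) 0) as [|Hne]; auto.
    generalize (Rabs_pos_lt _ Hne); lra. }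
  rewrite H0, <- sqrt_Rsqr_abs. unfold Rsqr. f_equal. ring.
Qed.

Lemma normd_vscal d c x : 0 <= c -> normd d (vscal c x) = c * normd d x.
Proof.
  intros Hc. unfold normd, dot, vscal.
  rewrite (sumR_ext d _ (fun i => (c * c) * (x i * x i))) by (intros; ring).
  rewrite sumR_scal, sqrt_mult_alt by (apply Rle_0_sqr). rewrite sqrt_square; auto.
Qed.

Lemma cauchy_schwarz d a b : dot d a b * dot d a b <= dot d a a * dot d b b.
Proof.
  unfold dot. induction d as [|d IH]; simpl; [lra|].
  set (S := sumR d (fun i => a i * b i)) in *. set (A := sumR d (fun i => a i * a i)) in *.
  set (B := sumR d (fun i => b i * b i)) in *.
  assert (HA : 0 <= A) by (apply sumR_nonneg; intros; apply Rle_0_sqr).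
  assert (HB : 0 <= B) by (apply sumR_nonneg; intros; apply Rle_0_sqr).
  assert (Hcross : 2 * S * (a d * b d) <= A * (b d * b d) + B * (a d * a d)).
  { destruct (Req_dec A 0) as [Z|Z].
    - assert (S = 0) by (rewrite Z in IH; nra). subst; nra.
    - assert (A * (A * (b d * b d) + B * (a d * a d) - 2 * S * (a d * b d))
              = (A * b d - S * a d) ^ 2 + a d * a d * (A * B - S * S)) by ring.
      assert (0 <= (A * b d - S * a d) ^ 2 + a d * a d * (A * B - S * S)).
      { apply Rplus_le_le_0_compat; [apply pow2_ge_0|]. apply Rmult_le_pos; [apply Rle_0_sqr| lra]. }
      nra. }
  nra.
Qed.

Lemma normd_triangle d a b : normd d (fun i => a i + b i) <= normd d a + normd d b.
Proof.
  assert (E : dot d (fun i => a i + b i) (fun i => a i + b i) = dot d a a + 2 * dot d a b + dot d b b).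
  { unfold dot. induction d; simpl. ring. rewrite IHd. ring. }
  assert (Hab : dot d a b <= normd d a * normd d b).
  { unfold normd. rewrite <- sqrt_mult_alt by apply dot_nonneg.
    apply Rle_trans with (Rabs (dot d a b)); [apply Rle_abs|].
    rewrite <- sqrt_Rsqr_abs. apply sqrt_le_1_alt. apply cauchy_schwarz. }
  generalize (normd_nonneg d a) (normd_nonneg d b) (normd_sq d a) (normd_sq d b); intros.
  unfold normd at 1. rewrite <- (sqrt_square (normd d a + normd d b)) by lra.
  apply sqrt_le_1_alt. rewrite E. nra.
Qed.

Lemma normd_lip d x y : Rabs (normd d y - normd d x) <= distd d y x.
Proof.
  assert (Hsym : distd d y x = distd d x y).
  { unfold distd, normd, dot, vsub. f_equal. apply sumR_ext. intros; ring. }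
  assert (Hdec : forall a b, normd d a = normd d (fun i => b i + vsub a b i)).
  { intros. unfold normd, dot, vsub. f_equal. apply sumR_ext. intros; ring. }
  generalize (normd_triangle d x (vsub y x)) (normd_triangle d y (vsub x y)).
  rewrite <- Hdec, <- Hdec. unfold distd in *. intros. apply Rabs_le. lra.
Qed.

(** * Limits at a point *)
Lemma limit1_in_eps f D l x0 : limit1_in f D l x0 <->
  forall eps, 0 < eps -> exists alp, 0 < alp /\
    forall x, D x -> Rabs (x - x0) < alp -> Rabs (f x - l) < eps.
Proof.
  unfold limit1_in, limit_in; simpl; unfold Rdist. split.
  - intros H e He. destruct (H e He) as [a [Ha K]]. exists a; split; auto.
  - intros H e He. destruct (H e He) as [a [Ha K]]. exists a; split; [lra|]. intros x [Dx Hx]; auto.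
Qed.

Lemma limit_ext_on f g D l x0 : (forall x, D x -> f x = g x) ->
  limit1_in f D l x0 -> limit1_in g D l x0.
Proof.
  intros E H. rewrite limit1_in_eps in *. intros e He. destruct (H e He) as [a [Ha K]].
  exists a; split; auto. intros x Dx Hx. rewrite <- E; auto.
Qed.

Lemma derive_of_limit f x l (D : R -> Prop) :
  (exists del, 0 < del /\ forall h, h <> 0 -> Rabs h < del -> D h) ->
  limit1_in (fun h => (f (x + h) - f x) / h) D l 0 -> derivable_pt_lim f x l.
Proof.
  intros [del [Hdel HD]] H e He. rewrite limit1_in_eps in H.
  destruct (H e He) as [a [Ha K]].
  assert (Hm : 0 < Rmin a del) by (apply Rmin_pos; lra).
  exists (mkposreal _ Hm). intros h Hh0 Hh. simpl in Hh.
  generalize (Rmin_l a del) (Rmin_r a del); intros.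
  apply K; [apply HD|]; rewrite ?Rminus_0_r; auto; lra.
Qed.

Lemma limit_of_derive f x l : derivable_pt_lim f x l ->
  limit1_in (fun h => (f (x + h) - f x) / h) (fun h => h <> 0) l 0.
Proof.
  intro H. rewrite limit1_in_eps. intros e He. destruct (H e He) as [a K].
  exists a; split; [apply cond_pos|]. intros h Hh Ha. rewrite Rminus_0_r in Ha. auto.
Qed.

Lemma limit_ge f D l x0 m : (forall x, D x -> m <= f x) ->
  (forall a, 0 < a -> exists x, D x /\ Rabs (x - x0) < a) -> limit1_in f D l x0 -> m <= l.
Proof.
  intros Hm Hadh H. destruct (Rle_lt_dec m l) as [|Hl]; auto. exfalso.
  rewrite limit1_in_eps in H. destruct (H (m - l) ltac:(lra)) as [a [Ha K]].
  destruct (Hadh a Ha) as [x [Dx Hx]]. specialize (K x Dx Hx). specialize (Hm x Dx).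
  apply Rabs_def2 in K. lra.
Qed.

(** Quotient of limits when the denominator stays [>= m > 0]; when the
    numerator tends to 0 the denominator need not converge. *)
Lemma limit_div_bounded N Dn a b m : 0 < m ->
  (forall k, k <> 0 -> m <= Dn k) ->
  limit1_in N (fun k => k <> 0) a 0 ->
  (a = 0 \/ limit1_in Dn (fun k => k <> 0) b 0) ->
  limit1_in (fun k => N k / Dn k) (fun k => k <> 0) (a / b) 0.
Proof.
  intros Hm HD HN [-> | HDb].
  - rewrite limit1_in_eps in HN. rewrite limit1_in_eps. intros e He.
    destruct (HN (e * m) ltac:(nra)) as [al [Hal K]]. exists al; split; auto.
    intros k Hk Hka. specialize (K k Hk Hka). specialize (HD k Hk).
    rewrite Rminus_0_r in K. unfold Rdiv. rewrite Rmult_0_l, Rminus_0_r, Rabs_mult, Rabs_inv, (Rabs_pos_eq (Dn k)) by lra.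
    apply Rmult_lt_reg_r with (Dn k); [lra|]. rewrite Rmult_assoc, Rinv_l, Rmult_1_r by lra.
    generalize (Rabs_pos (N k)); nra.
  - assert (Hb : m <= b).
    { apply (limit_ge Dn (fun k => k <> 0) b 0 m HD); auto.
      intros al Hal. exists (al / 2). split; [lra|]. rewrite Rminus_0_r, Rabs_pos_eq; lra. }
    apply (limit_mul N (fun k => / Dn k)); auto. apply limit_inv; auto. lra.
Qed.

Lemma limit_reparam Q l (kk : R -> R) c : 0 < c ->
  (forall h, h <> 0 -> kk h <> 0 /\ Rabs (kk h) <= c * Rabs h) ->
  limit1_in Q (fun k => k <> 0) l 0 -> limit1_in (fun h => Q (kk h)) (fun h => h <> 0) l 0.
Proof.
  intros Hc Hk H. rewrite limit1_in_eps in H. rewrite limit1_in_eps. intros e He.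
  destruct (H e He) as [a [Ha K]]. exists (a / c); split; [apply Rdiv_lt_0_compat; auto|].
  intros h Hh Hha. destruct (Hk h Hh) as [Hk0 Hkb]. apply K; auto.
  rewrite Rminus_0_r in *. apply Rle_lt_trans with (c * Rabs h); auto.
  apply Rmult_lt_reg_r with (/ c); [apply Rinv_0_lt_compat; auto|].
  replace (c * Rabs h * / c) with (Rabs h) by (field; lra). exact Hha.
Qed.

(** * Derivative through the inverse of a map with slopes bounded below

    If [phi] has all its difference quotients [>= m > 0] and [psi] is a right
    inverse of [phi], then [E ∘ psi] is differentiable at [r] with derivative
    [E'(u) / phi'(u)], [u = psi r]. *)
Definition slopes_ge (phi : R -> R) (m : R) : Prop :=
  forall u v, u < v -> m * (v - u) <= phi v - phi u.

Lemma slopes_ge_quotient phi m u k : slopes_ge phi m -> k <> 0 -> m <= (phi (u + k) - phi u) / k.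
Proof.
  intros H Hk. destruct (Rlt_dec 0 k).
  - generalize (H u (u + k) ltac:(lra)). intro.
    apply Rmult_le_reg_r with k; auto. unfold Rdiv. rewrite Rmult_assoc, Rinv_l by lra. lra.
  - generalize (H (u + k) u ltac:(lra)). intro.
    replace ((phi (u + k) - phi u) / k) with ((phi u - phi (u + k)) / (- k)) by (field; auto).
    apply Rmult_le_reg_r with (-k); [lra|]. unfold Rdiv. rewrite Rmult_assoc, Rinv_l by lra. lra.
Qed.

Lemma slopes_ge_lip phi m u v : slopes_ge phi m -> 0 <= m ->
  m * Rabs (u - v) <= Rabs (phi u - phi v).
Proof.
  intros H Hm. destruct (Rtotal_order u v) as [Hq|[->|Hq]].
  - generalize (H u v Hq); intro. rewrite Rabs_left, (Rabs_left1 (phi u - phi v)) by nra. lra.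
  - rewrite !Rminus_diag, Rabs_R0. lra.
  - generalize (H v u Hq); intro. rewrite Rabs_pos_eq, (Rabs_pos_eq (phi u - phi v)) by nra. lra.
Qed.

Lemma slopes_ge_surjective phi m : 0 < m -> slopes_ge phi m ->
  (forall u, continuity_pt phi u) -> forall r, exists u, phi u = r.
Proof.
  intros Hm Hsl Hc r. set (b := (Rabs r + Rabs (phi 0)) / m + 1).
  assert (Hb : 0 < b) by (unfold b; generalize (Rabs_pos r) (Rabs_pos (phi 0));
    intros; assert (0 <= (Rabs r + Rabs (phi 0)) / m) by (apply Rmult_le_pos; [|left; apply Rinv_0_lt_compat]; lra); lra).
  assert (Hmb : m * b = Rabs r + Rabs (phi 0) + m) by (unfold b; field; lra).
  generalize (Hsl 0 b Hb) (Hsl (-b) 0 ltac:(lra)) (Rle_abs r) (Rle_abs (- r)) (Rle_abs (phi 0))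
    (Rle_abs (- phi 0)). rewrite !Rabs_Ropp. intros Hup Hlo ? ? ? ?.
  destruct (IVT_cor (fun u => phi u - r) (-b) b) as [z [_ Hz]].
  - intro x. apply continuity_pt_minus; [apply Hc| apply continuity_pt_const; intros ? ?; auto].
  - lra.
  - nra.
  - exists z. lra.
Qed.

Lemma derive_comp_inverse (E phi psi : R -> R) m r E' P' :
  0 < m -> slopes_ge phi m -> (forall y, phi (psi y) = y) ->
  derivable_pt_lim E (psi r) E' -> (E' = 0 \/ derivable_pt_lim phi (psi r) P') ->
  derivable_pt_lim (fun y => E (psi y)) r (E' / P').
Proof.
  intros Hm Hsl Hinv HE HP. set (u := psi r).
  set (kk := fun h => psi (r + h) - u).
  assert (Hk : forall h, h <> 0 -> kk h <> 0 /\ Rabs (kk h) <= / m * Rabs h /\ phi (u + kk h) - phi u = h).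
  { intros h Hh. assert (Hp : phi (u + kk h) - phi u = h).
    { unfold kk, u. replace (psi r + (psi (r + h) - psi r)) with (psi (r + h)) by ring.
      rewrite !Hinv. ring. }
    split; [|split; auto].
    - intro Z. rewrite Z, Rplus_0_r in Hp. lra.
    - generalize (slopes_ge_lip phi m (u + kk h) u Hsl ltac:(lra)).
      replace (u + kk h - u) with (kk h) by ring. rewrite Hp. intro.
      apply Rmult_le_reg_l with m; auto. rewrite <- Rmult_assoc, Rinv_r, Rmult_1_l by lra. lra. }
  apply (derive_of_limit _ r _ (fun h => h <> 0)); [exists 1; split; auto; lra|].
  set (Q := fun k => ((E (u + k) - E u) / k) / ((phi (u + k) - phi u) / k)).
  apply (limit_ext_on (fun h => Q (kk h))).
  { intros h Hh. destruct (Hk h Hh) as (Hk0 & _ & Hp). unfold Q. rewrite Hp.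
    unfold kk in *. fold u. replace (u + (psi (r + h) - u)) with (psi (r + h)) by ring. field; auto. }
  apply (limit_reparam Q _ kk (/ m)); [apply Rinv_0_lt_compat; auto| intros h Hh; destruct (Hk h Hh) as (? & ? & _); auto|].
  apply (limit_div_bounded _ _ _ _ m Hm).
  - intros k Hk0. apply slopes_ge_quotient; auto.
  - apply limit_of_derive; auto.
  - destruct HP; [left | right; apply limit_of_derive]; auto.
Qed.

(** * A mixed chain rule

    If every [F(·,s)], [s ∈ [0,T)], is differentiable with a derivative [Fr]
    jointly continuous at [(r,t)], and [q] is differentiable at [t] with
    [q t = r], then [s ↦ F(q s, s) - F(r, s)] has derivative [Fr r t · q'(t)]
    at the interior time [t].  By the mean value theorem the increment is
    [Fr(ξ_s, s) (q s - r)] with [ξ_s] between [r] and [q s]; the next lemma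
    chooses these intermediate points as a function of the time increment. *)
Lemma mean_value_points (F Fr : R -> R -> R) (q : R -> R) T r t :
  (forall s, 0 <= s < T -> forall y, derivable_pt_lim (fun y => F y s) y (Fr y s)) ->
  exists xi : R -> R, forall h, 0 <= t + h < T ->
     Rabs (xi h - r) <= Rabs (q (t + h) - r) /\
     F (q (t + h)) (t + h) - F r (t + h) = Fr (xi h) (t + h) * (q (t + h) - r).
Proof.
  intros HF. set (P := fun h xi => 0 <= t + h < T ->
     Rabs (xi - r) <= Rabs (q (t + h) - r) /\
     F (q (t + h)) (t + h) - F r (t + h) = Fr xi (t + h) * (q (t + h) - r)).
  assert (Hxi : forall h, exists xi, P h xi).
  { intro h. destruct (Rle_dec 0 (t + h)) as [H0|H0]; [destruct (Rlt_dec (t + h) T) as [H1|H1]|].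
    - destruct (MVT_between (fun y => F y (t + h)) (fun y => Fr y (t + h)) r (q (t + h)))
        as [xi Hxi]; [intro; apply HF; lra|]. exists xi. intros _. exact Hxi.
    - exists 0. intro; lra.
    - exists 0. intro; lra. }
  exists (fun h => epsilon (inhabits 0) (P h)). intro h. apply (epsilon_spec (inhabits 0) (P h) (Hxi h)).
Qed.

Lemma derive_mixed_chain (F Fr : R -> R -> R) (q : R -> R) T r t q' :
  0 < t < T -> q t = r -> derivable_pt_lim q t q' ->
  (forall s, 0 <= s < T -> forall y, derivable_pt_lim (fun y => F y s) y (Fr y s)) ->
  cont_within Rdist T Fr r t ->
  derivable_pt_lim (fun s => F (q s) s - F r s) t (Fr r t * q').
Proof.
  intros Ht Hq Hqd HF HFr.
  destruct (mean_value_points F Fr q T r t HF) as [xi Hxi_spec].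
  set (D0 := fun h => h <> 0 /\ 0 <= t + h < T).
  apply (derive_of_limit _ t _ D0).
  { exists (Rmin t (T - t)); split; [apply Rmin_pos; lra|]. intros h Hh Hha.
    generalize (Rmin_l t (T - t)) (Rmin_r t (T - t)); intros. apply Rabs_def2 in Hha.
    split; auto; lra. }
  apply (limit_ext_on (fun h => Fr (xi h) (t + h) * ((q (t + h) - q t) / h))).
  { intros h [Hh Hth]. destruct (Hxi_spec h Hth) as [_ E]. rewrite Hq, E. field; auto. }
  apply limit_mul.
  - rewrite limit1_in_eps. intros e He. destruct (HFr e He) as [d1 [Hd1 K1]].
    assert (Hqc : continuity_pt q t) by (apply derivable_continuous_pt; exists q'; auto).
    destruct (continuity_pt_eps q t d1 Hqc Hd1) as [d2 [Hd2 K2]].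
    exists (Rmin d1 d2); split; [apply Rmin_pos; lra|]. intros h [Hh Hth] Hha.
    generalize (Rmin_l d1 d2) (Rmin_r d1 d2); intros. rewrite Rminus_0_r in Hha.
    destruct (Hxi_spec h Hth) as [Hb _]. apply K1; auto.
    + unfold Rdist. specialize (K2 (t + h) ltac:(replace (t + h - t) with h by ring; lra)).
      rewrite Hq in K2. lra.
    + replace (t + h - t) with h by ring. lra.
  - apply (limit1_imp _ (fun h => h <> 0)); [intros h [Hh _]; auto|].
    apply limit_of_derive; auto.
Qed.

(** * Continuity of an inverse *)
Lemma cont_within_inverse (Phi psi : R -> R -> R) T t t1 m r :
  0 <= t < T -> t < t1 -> 0 < m ->
  (forall s, 0 <= s <= t1 -> slopes_ge (fun u => Phi u s) m) ->
  (forall y s, 0 <= s < T -> Phi (psi y s) s = y) ->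
  cont_within Rdist T Phi (psi r t) t -> cont_within Rdist T psi r t.
Proof.
  intros Ht Ht1 Hm Hsl Hinv HPhi e He. set (u := psi r t).
  destruct (HPhi (e * m / 2) ltac:(nra)) as [d1 [Hd1 K1]]. fold u in K1.
  exists (Rmin (Rmin d1 (e * m / 2)) (t1 - t)). split; [repeat apply Rmin_pos; nra|].
  intros r' s Hs Hr Hts. unfold Rdist in *.
  generalize (Rmin_l (Rmin d1 (e * m / 2)) (t1 - t)) (Rmin_r (Rmin d1 (e * m / 2)) (t1 - t))
    (Rmin_l d1 (e * m / 2)) (Rmin_r d1 (e * m / 2)); intros.
  apply Rabs_def2 in Hts as Hts'.
  generalize (slopes_ge_lip _ m (psi r' s) u (Hsl s ltac:(lra)) ltac:(lra)).
  rewrite Hinv by auto. intro L.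
  specialize (K1 u s Hs ltac:(rewrite Rminus_diag, Rabs_R0; lra) ltac:(lra)).
  assert (Hr_t : Phi u t = r) by (apply Hinv; lra).
  assert (Rabs (r' - Phi u s) < e * m).
  { replace (r' - Phi u s) with ((r' - r) - (Phi u s - Phi u t)) by (rewrite Hr_t; ring).
    eapply Rle_lt_trans; [apply Rabs_triang|]. rewrite Rabs_Ropp. lra. }
  apply Rmult_lt_reg_l with m; auto. lra.
Qed.


(** * The radial problem

    [G] is the radial profile of the datum: even, C^1, non-negative,
    non-increasing on [0,∞) with maximum [G 0 = Mf > 0].  The characteristic
    from radius [u] is compressed by the factor [A u t = 1 - γ d G(u)^γ t],
    reaching radius [Phi u t = u A^p], [p = (1+γ)/(γ d)], with the value
    [Ech u t = G(u) A^{-1/γ}].  Since [A u t >= Amin t > 0] for [t < t*],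
    all slopes of [Phi(·,t)] are [>= mslope t = Amin(t)^p]. *)
Section RadialProblem.
Variables (gam dd Mf : R) (G G' : R -> R).
Hypothesis gam_pos : 0 < gam.
Hypothesis dd_pos : 0 < dd.
Hypothesis Mf_pos : 0 < Mf.
Hypothesis G_deriv : forall u, derivable_pt_lim G u (G' u).
Hypothesis G'_cont : forall u, continuity_pt G' u.
Hypothesis G_nonneg : forall u, 0 <= G u.
Hypothesis G_origin : G 0 = Mf.
Hypothesis G_even : forall u, G u = G (Rabs u).
Hypothesis G_nonincr : forall u v, 0 <= u <= v -> G v <= G u.

Definition expo := (1 + gam) / (gam * dd).
Definition Gg u := rpow (G u) gam.
Definition Mg := rpow Mf gam.
Definition tstar := / (gam * dd * Mg).
Definition A u t := 1 - gam * dd * Gg u * t.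
Definition Amin t := 1 - gam * dd * Mg * t.
Definition mslope t := Rpower (Amin t) expo.
Definition Phi u t := u * Rpower (A u t) expo.
Definition Ech u t := G u * Rpower (A u t) (- (1 / gam)).

Lemma gd_pos : 0 < gam * dd.
Proof. nra. Qed.

Lemma expo_pos : 0 < expo.
Proof. unfold expo. apply Rdiv_lt_0_compat; nra. Qed.

Lemma Mg_eq : Mg = Rpower Mf gam.
Proof. apply rpow_pos; auto. Qed.

Lemma Mg_pos : 0 < Mg.
Proof. rewrite Mg_eq. apply Rpower_pos. Qed.

Lemma tstar_pos : 0 < tstar.
Proof. unfold tstar. apply Rinv_0_lt_compat. generalize gd_pos Mg_pos; nra. Qed.

Lemma tstar_Mg : gam * dd * Mg * tstar = 1.
Proof. unfold tstar. field. generalize gd_pos Mg_pos; nra. Qed.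

Lemma G_le_max u : G u <= Mf.
Proof. rewrite G_even, <- G_origin. apply G_nonincr. generalize (Rabs_pos u); lra. Qed.

Lemma Gg_bounds u : 0 <= Gg u <= Mg.
Proof. split; [apply rpow_ge0|]. apply rpow_mono; [split|]; auto using G_le_max; lra. Qed.

Lemma G_cont u : continuity_pt G u.
Proof. apply derivable_continuous_pt. exists (G' u). apply G_deriv. Qed.

Lemma Gg_cont u : continuity_pt Gg u.
Proof. apply (continuity_pt_comp G (fun y => rpow y gam)); [apply G_cont| apply continuity_pt_rpow; auto]. Qed.

Lemma Amin_pos t : t < tstar -> 0 < Amin t.
Proof.
  intro. unfold Amin. generalize tstar_Mg gd_pos Mg_pos; intros.
  assert (gam * dd * Mg * t < gam * dd * Mg * tstar) by (apply Rmult_lt_compat_l; nra). lra.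
Qed.

Lemma A_bounds u t : 0 <= t -> Amin t <= A u t <= 1.
Proof.
  intros. unfold A, Amin. generalize (Gg_bounds u) gd_pos; intros.
  assert (0 <= gam * dd * t) by nra. split; nra.
Qed.

Lemma A_pos u t : 0 <= t < tstar -> 0 < A u t.
Proof. intros. generalize (A_bounds u t) (Amin_pos t); lra. Qed.

Lemma A_mono_abs u v t : 0 <= t -> Rabs u <= Rabs v -> A u t <= A v t.
Proof.
  intros. assert (Gg v <= Gg u).
  { unfold Gg. rewrite (G_even u), (G_even v). apply rpow_mono; [split; auto| lra].
    apply G_nonincr. split; [apply Rabs_pos| auto]. }
  unfold A. generalize gd_pos; intro. assert (0 <= gam * dd * t) by nra. nra.
Qed.

Lemma mslope_pos t : 0 < mslope t.
Proof. apply Rpower_pos. Qed.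

Lemma mslope_nonincr s t : 0 <= s <= t -> t < tstar -> mslope t <= mslope s.
Proof.
  intros. unfold mslope. apply Rle_Rpower_l; [generalize expo_pos; lra|].
  generalize (Amin_pos t) Mg_pos gd_pos; intros. unfold Amin in *.
  assert (0 < gam * dd * Mg) by nra. split; [lra| nra].
Qed.

Lemma RpowerA_bounds u t : 0 <= t < tstar -> mslope t <= Rpower (A u t) expo <= 1.
Proof.
  intros. generalize (A_bounds u t) (Amin_pos t) expo_pos; intros. split.
  - apply Rle_Rpower_l; lra.
  - apply Rpower_le1; lra.
Qed.

(** [Phi(·,t)] is increasing with slopes at least [mslope t]: on each side of
    the origin both factors of [u A(u,t)^p] grow with [|u|]. *)
Lemma Phi_slopes t : 0 <= t < tstar -> slopes_ge (fun u => Phi u t) (mslope t).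
Proof.
  intros Ht u v Huv. unfold Phi.
  generalize (RpowerA_bounds u t Ht) (RpowerA_bounds v t Ht); intros [Pu1 Pu2] [Pv1 Pv2].
  assert (Hmono : forall a b, Rabs a <= Rabs b -> Rpower (A a t) expo <= Rpower (A b t) expo).
  { intros. apply Rle_Rpower_l; [generalize expo_pos; lra|].
    split; [apply A_pos; auto| apply A_mono_abs; lra]. }
  destruct (Rle_lt_dec 0 u) as [Hu|Hu]; [|destruct (Rle_lt_dec v 0) as [Hv|Hv]].
  - assert (Rpower (A u t) expo <= Rpower (A v t) expo) by (apply Hmono; rewrite !Rabs_pos_eq; lra). nra.
  - assert (Rpower (A v t) expo <= Rpower (A u t) expo) by (apply Hmono; rewrite !Rabs_left1; lra). nra.
  - nra.
Qed.

Lemma A_cont u t : cont_within Rdist tstar A u t.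
Proof.
  unfold A. apply cont_within_minus; [apply cont_within_const|].
  apply cont_within_mult; [|apply cont_within_time].
  apply cont_within_mult; [apply cont_within_const| apply cont_within_space_fun, Gg_cont].
Qed.

Lemma RpowerA_cont a u t : 0 <= t < tstar -> cont_within Rdist tstar (fun u t => Rpower (A u t) a) u t.
Proof.
  intros. apply (cont_within_comp _ _ (fun y => Rpower y a) A); [|apply A_cont].
  apply continuity_pt_Rpower, A_pos; auto.
Qed.

Lemma Phi_cont u t : 0 <= t < tstar -> cont_within Rdist tstar Phi u t.
Proof. intros. apply cont_within_mult; [apply cont_within_space| apply RpowerA_cont; auto]. Qed.

Lemma Ech_cont u t : 0 <= t < tstar -> cont_within Rdist tstar Ech u t.
Proof. intros. apply cont_within_mult; [apply cont_within_space_fun, G_cont| apply RpowerA_cont; auto]. Qed.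

(** The foot [psi r t] of the characteristic through [(r,t)]. *)
Definition psi r t := epsilon (inhabits 0) (fun u => Phi u t = r).

Lemma psi_spec r t : 0 <= t < tstar -> Phi (psi r t) t = r.
Proof.
  intro Ht. apply (epsilon_spec (inhabits 0) (fun u => Phi u t = r)).
  apply (slopes_ge_surjective (fun u => Phi u t) (mslope t)); auto using mslope_pos, Phi_slopes.
  intro u. apply (continuity_pt_of_within tstar Phi u t Ht), Phi_cont; auto.
Qed.

Lemma psi_Phi u t : 0 <= t < tstar -> psi (Phi u t) t = u.
Proof.
  intros Ht. generalize (slopes_ge_lip _ _ (psi (Phi u t) t) u (Phi_slopes t Ht)
    (Rlt_le _ _ (mslope_pos t))) (mslope_pos t). rewrite psi_spec, Rminus_diag, Rabs_R0 by auto.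
  intros. destruct (Req_dec (psi (Phi u t) t) u) as [|Hne]; auto.
  generalize (Rabs_pos_lt (psi (Phi u t) t - u) ltac:(lra)); nra.
Qed.

Lemma psi_cont r t : 0 <= t < tstar -> cont_within Rdist tstar psi r t.
Proof.
  intros Ht. apply (cont_within_inverse Phi psi tstar t ((t + tstar) / 2) (mslope ((t + tstar) / 2)));
    auto using mslope_pos; try lra.
  - intros s Hs u v Huv. apply Rle_trans with (mslope s * (v - u)).
    + apply Rmult_le_compat_r; [lra| apply mslope_nonincr; lra].
    + apply Phi_slopes; lra.
  - intros y s Hs. apply psi_spec; auto.
  - apply Phi_cont; auto.
Qed.

(** ** Derivatives in the space variable *)

Lemma G'_at_root u : G u = 0 -> G' u = 0.
Proof.
  intro Z. apply (deriv_minimum G (u - 1) (u + 1) u (exist _ (G' u) (G_deriv u))); try lra.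
  intros. rewrite Z. auto.
Qed.

Lemma G'_origin : G' 0 = 0.
Proof.
  apply (deriv_maximum G (-1) 1 0 (exist _ (G' 0) (G_deriv 0))); try lra.
  intros. rewrite G_origin. apply G_le_max.
Qed.

Lemma u_G'_nonpos u : u * G' u <= 0.
Proof.
  destruct (Rtotal_order u 0) as [Hu|[->|Hu]].
  - assert (- G' u <= 0).
    { apply (derive_nonpos_of_right (fun y => - G y) u _ (- u)); [lra| apply derivable_pt_lim_opp, G_deriv|].
      intros h Hh. rewrite (G_even u), (G_even (u + h)). apply Ropp_le_contravar, G_nonincr.
      rewrite !Rabs_left by lra. lra. }
    nra.
  - lra.
  - assert (G' u <= 0).
    { apply (derive_nonpos_of_right G u _ 1); auto; [lra|]. intros h Hh. apply G_nonincr. lra. }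
    nra.
Qed.

Lemma Gg_deriv u : 0 < G u -> derivable_pt_lim Gg u (gam * rpow (G u) (gam - 1) * G' u).
Proof.
  intro Hp. rewrite rpow_pos by auto.
  apply derive_local with (fun v => Rpower (G v) gam).
  - destruct (continuity_pt_eps G u (G u) (G_cont u) Hp) as [d [Hd K]]. exists d; split; auto.
    intros y Hy. specialize (K y Hy). apply Rabs_def2 in K. unfold Gg. rewrite rpow_pos; auto. lra.
  - replace (gam * Rpower (G u) (gam - 1) * G' u) with ((gam * Rpower (G u) (gam - 1)) * G' u) by ring.
    apply (derivable_pt_lim_comp G (fun y => Rpower y gam)); auto.
    apply derivable_pt_lim_power; auto.
Qed.

Lemma RpowerA_deriv_u u t q : 0 <= t < tstar -> 0 < G u ->
  derivable_pt_lim (fun v => Rpower (A v t) q) u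
    (q * Rpower (A u t) (q - 1) * (- (gam * dd * t) * (gam * rpow (G u) (gam - 1) * G' u))).
Proof.
  intros Ht Hp. apply (derivable_pt_lim_comp (fun v => A v t) (fun y => Rpower y q) u).
  - unfold A. apply (derivable_pt_lim_ext (fun v => 1 + (- (gam * dd * t)) * Gg v)); [intro; ring|].
    replace (- (gam * dd * t) * (gam * rpow (G u) (gam - 1) * G' u))
      with (0 + - (gam * dd * t) * (gam * rpow (G u) (gam - 1) * G' u)) by ring.
    apply derivable_pt_lim_plus; [apply derivable_pt_lim_const|].
    apply derivable_pt_lim_scal, Gg_deriv; auto.
  - apply derivable_pt_lim_power, A_pos; auto.
Qed.

Definition EchU u t := G' u * Rpower (A u t) (- (1 / gam) - 1).
Definition PhiU u t := Rpower (A u t) expo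
  - u * G' u * (expo * gam * dd * t * gam * rpow (G u) (gam - 1) * Rpower (A u t) (expo - 1)).

Lemma Ech_deriv_u u t : 0 <= t < tstar -> derivable_pt_lim (fun v => Ech v t) u (EchU u t).
Proof.
  intros Ht. destruct (Req_dec (G u) 0) as [Z|Z].
  - unfold EchU. rewrite G'_at_root, Rmult_0_l by auto.
    apply (derive_mult_flat G _ u (Rpower (Amin t) (- (1 / gam)))); auto.
    + rewrite <- (G'_at_root u Z). auto.
    + intro y. rewrite Rabs_pos_eq by (left; apply Rpower_pos).
      apply Rpower_nonincr; [split; [apply Amin_pos; lra| apply A_bounds; lra]|].
      assert (0 < 1 / gam) by (apply Rdiv_lt_0_compat; lra). lra.
  - assert (Hp : 0 < G u) by (generalize (G_nonneg u); lra).
    assert (HA : 0 < A u t) by (apply A_pos; auto).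
    eapply derivable_pt_lim_ext; [intro; reflexivity|].
    replace (EchU u t) with (G' u * Rpower (A u t) (- (1 / gam)) + G u * ((- (1 / gam))
      * Rpower (A u t) (- (1 / gam) - 1) * (- (gam * dd * t) * (gam * rpow (G u) (gam - 1) * G' u)))).
    + apply (derivable_pt_lim_mult G (fun v => Rpower (A v t) (- (1 / gam)))); auto.
      apply RpowerA_deriv_u; auto.
    + unfold EchU. rewrite (Rpower_minus1 (A u t) (- (1 / gam))), rpow_pos, Rpower_minus1 by auto.
      unfold A, Gg. rewrite rpow_pos by auto. field. unfold A, Gg in HA. rewrite rpow_pos in HA by auto.
      split; lra.
Qed.

Lemma PhiU_ge u t : 0 <= t < tstar -> mslope t <= Rpower (A u t) expo <= PhiU u t.
Proof.
  intros Ht. split; [apply RpowerA_bounds; auto|]. unfold PhiU.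
  assert (0 <= expo * gam * dd * t * gam * rpow (G u) (gam - 1) * Rpower (A u t) (expo - 1)).
  { generalize expo_pos gd_pos (rpow_ge0 (G u) (gam - 1)) (Rpower_pos (A u t) (expo - 1)); intros.
    repeat (apply Rmult_le_pos; [|lra]); lra. }
  generalize (u_G'_nonpos u). nra.
Qed.

Lemma Phi_deriv_u u t : 0 <= t < tstar -> 0 < G u -> derivable_pt_lim (fun v => Phi v t) u (PhiU u t).
Proof.
  intros Ht Hp. unfold Phi.
  replace (PhiU u t) with (1 * Rpower (A u t) expo + u * (expo * Rpower (A u t) (expo - 1)
    * (- (gam * dd * t) * (gam * rpow (G u) (gam - 1) * G' u)))) by (unfold PhiU; ring).
  apply (derivable_pt_lim_mult (fun v => v) (fun v => Rpower (A v t) expo)).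
  - apply derivable_pt_lim_id.
  - apply RpowerA_deriv_u; auto.
Qed.

(** ** The radial profile and its space derivative *)
Definition radial r t := Ech (psi r t) t.
Definition radial_r r t := EchU (psi r t) t / PhiU (psi r t) t.

Lemma radial_deriv_r r t : 0 <= t < tstar -> derivable_pt_lim (fun y => radial y t) r (radial_r r t).
Proof.
  intros Ht. apply (derive_comp_inverse (fun v => Ech v t) (fun v => Phi v t) (fun y => psi y t) (mslope t)).
  - apply mslope_pos.
  - apply Phi_slopes; auto.
  - intro y. apply psi_spec; auto.
  - apply Ech_deriv_u; auto.
  - destruct (Req_dec (G (psi r t)) 0) as [Z|Z].
    + left. unfold EchU. rewrite G'_at_root; auto; ring.
    + right. apply Phi_deriv_u; auto. generalize (G_nonneg (psi r t)); lra.
Qed.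

Lemma EchU_cont u t : 0 <= t < tstar -> cont_within Rdist tstar EchU u t.
Proof.
  intros. apply cont_within_mult; [apply cont_within_space_fun; auto| apply RpowerA_cont; auto].
Qed.

Lemma PhiU_cont u t : 0 <= t < tstar -> 0 < G u -> cont_within Rdist tstar PhiU u t.
Proof.
  intros Ht Hp. unfold PhiU.
  assert (Hpow : continuity_pt (fun v => rpow (G v) (gam - 1)) u).
  { apply (continuity_pt_comp G (fun y => rpow y (gam - 1))); [apply G_cont|].
    apply continuity_pt_locally_ext with (fun y => Rpower y (gam - 1)) (G u); auto.
    - intros y Hy. unfold Rdist in Hy. apply Rabs_def2 in Hy. rewrite rpow_pos; auto. lra.
    - apply continuity_pt_Rpower; auto. }
  apply cont_within_minus; [apply RpowerA_cont; auto|].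
  repeat apply cont_within_mult; auto using cont_within_space, cont_within_time,
    cont_within_const, cont_within_space_fun, RpowerA_cont.
Qed.

Lemma radial_r_bound v s s1 : 0 <= s <= s1 -> s1 < tstar ->
  Rabs (EchU v s / PhiU v s) <= Rpower (Amin s1) (- (1 / gam) - 1) / mslope s1 * Rabs (G' v).
Proof.
  intros Hs Hs1.
  generalize (A_bounds v s ltac:(lra)) (Amin_pos s1 Hs1) (PhiU_ge v s ltac:(lra))
    (mslope_nonincr s s1 Hs Hs1) (mslope_pos s1); intros HA Ha1 HP Hm Hm1.
  assert (HX : Rpower (A v s) (- (1 / gam) - 1) <= Rpower (Amin s1) (- (1 / gam) - 1)).
  { apply Rpower_nonincr; [|assert (0 < 1 / gam) by (apply Rdiv_lt_0_compat; lra); lra].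
    unfold Amin in *. generalize gd_pos Mg_pos; intros.
    assert (0 < gam * dd * Mg) by nra. split; [lra| nra]. }
  generalize (Rpower_pos (A v s) (- (1 / gam) - 1)); intro HX0.
  unfold EchU, Rdiv. rewrite !Rabs_mult, Rabs_inv, (Rabs_pos_eq (Rpower _ _)), (Rabs_pos_eq (PhiU v s)) by lra.
  assert (Hq : Rpower (A v s) (- (1 / gam) - 1) * / PhiU v s
              <= Rpower (Amin s1) (- (1 / gam) - 1) * / mslope s1).
  { apply Rmult_le_compat; [lra| left; apply Rinv_0_lt_compat; lra| auto|].
    apply Rinv_le_contravar; lra. }
  generalize (Rabs_pos (G' v)). nra.
Qed.

Lemma radial_r_cont r t : 0 <= t < tstar -> cont_within Rdist tstar radial_r r t.
Proof.
  intros Ht. set (u := psi r t). destruct (Req_dec (G u) 0) as [Z|Z].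
  - set (t1 := (t + tstar) / 2).
    apply (cont_within_dominated Rdist tstar radial_r (fun r s => G' (psi r s)) r t
      (Rpower (Amin t1) (- (1 / gam) - 1) / mslope t1)).
    + unfold radial_r, EchU. fold u. rewrite G'_at_root by auto. unfold Rdiv. ring.
    + apply G'_at_root; auto.
    + apply (cont_within_subst Rdist tstar psi (fun u _ => G' u)); [apply psi_cont; auto|].
      apply cont_within_space_fun; auto.
    + exists ((tstar - t) / 2); split; [lra|]. intros r' s Hs _ Hts. apply Rabs_def2 in Hts.
      apply radial_r_bound; unfold t1; lra.
  - assert (Hp : 0 < G u) by (generalize (G_nonneg u); lra).
    apply (cont_within_subst Rdist tstar psi (fun u t => EchU u t / PhiU u t)); [apply psi_cont; auto|].
    fold u. apply cont_within_mult; [apply EchU_cont; auto|].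
    apply cont_within_inv; [generalize (PhiU_ge u t Ht) (mslope_pos t); lra| apply PhiU_cont; auto].
Qed.

Lemma radial_cont r t : 0 <= t < tstar -> cont_within Rdist tstar radial r t.
Proof. intros. apply (cont_within_subst Rdist tstar psi Ech); [apply psi_cont| apply Ech_cont]; auto. Qed.

(** ** The time derivative *)
Definition EchT u t := G u * (- (1 / gam) * Rpower (A u t) (- (1 / gam) - 1) * (- (gam * dd * Gg u))).
Definition PhiT u t := u * (expo * Rpower (A u t) (expo - 1) * (- (gam * dd * Gg u))).

Lemma Ech_deriv_t u t : 0 <= t < tstar -> derivable_pt_lim (fun s => Ech u s) t (EchT u t).
Proof.
  intros Ht. apply derivable_pt_lim_scal. apply derive_Rpower_affine.
  generalize (A_pos u t Ht). unfold A. lra.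
Qed.

Lemma Phi_deriv_t u t : 0 <= t < tstar -> derivable_pt_lim (fun s => Phi u s) t (PhiT u t).
Proof.
  intros Ht. apply derivable_pt_lim_scal. apply derive_Rpower_affine.
  generalize (A_pos u t Ht). unfold A. lra.
Qed.

Lemma radial_Phi u t : 0 <= t < tstar -> radial (Phi u t) t = Ech u t.
Proof. intros. unfold radial. rewrite psi_Phi; auto. Qed.

(** Along the characteristic [s ↦ Phi u s] through [(r,t)],
    [radial r s = Ech u s - (radial (Phi u s) s - radial r s)]; the bracket is
    differentiated by the mixed chain rule. *)
Definition radial_t r t := EchT (psi r t) t - radial_r r t * PhiT (psi r t) t.

Lemma radial_deriv_t r t : 0 < t < tstar -> derivable_pt_lim (fun s => radial r s) t (radial_t r t).
Proof.
  intros Ht. set (u := psi r t).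
  apply derive_local with (fun s => Ech u s - (radial (Phi u s) s - radial r s)).
  - exists (Rmin t (tstar - t)); split; [apply Rmin_pos; lra|].
    intros s Hs. generalize (Rmin_l t (tstar - t)) (Rmin_r t (tstar - t)); intros.
    apply Rabs_def2 in Hs. rewrite radial_Phi by lra. ring.
  - apply derivable_pt_lim_minus; [apply Ech_deriv_t; lra|].
    apply (derive_mixed_chain radial radial_r (fun s => Phi u s) tstar); auto.
    + apply psi_spec; lra.
    + apply Phi_deriv_t; lra.
    + intros s Hs y. apply radial_deriv_r; auto.
    + apply radial_r_cont; lra.
Qed.

Lemma radial_t_cont r t : 0 <= t < tstar -> cont_within Rdist tstar radial_t r t.
Proof.
  intros Ht. assert (HGg : forall u, cont_within Rdist tstar (fun u _ => - (gam * dd * Gg u)) u t).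
  { intro u. apply cont_within_opp, cont_within_mult; [apply cont_within_const|].
    apply cont_within_space_fun, Gg_cont. }
  apply cont_within_minus; [|apply cont_within_mult; [apply radial_r_cont; auto|]].
  - apply (cont_within_subst Rdist tstar psi EchT); [apply psi_cont; auto|].
    apply cont_within_mult; [apply cont_within_space_fun, G_cont|].
    repeat apply cont_within_mult; auto using cont_within_const, RpowerA_cont.
  - apply (cont_within_subst Rdist tstar psi PhiT); [apply psi_cont; auto|].
    apply cont_within_mult; [apply cont_within_space|].
    repeat apply cont_within_mult; auto using cont_within_const, RpowerA_cont.
Qed.

(** ** Initial value and the radial equation *)
Lemma radial_initial r : radial r 0 = G r.
Proof.
  assert (HA : forall u, A u 0 = 1) by (intro; unfold A; ring).
  assert (HT : 0 <= 0 < tstar) by (generalize tstar_pos; lra).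
  replace r with (Phi r 0) at 1 by (unfold Phi; rewrite HA, Rpower_base1; ring).
  rewrite radial_Phi by auto. unfold Ech. rewrite HA, Rpower_base1. ring.
Qed.

(** [ρ_t - (1+γ) ρ^γ r ρ_r = d ρ^{1+γ}]: the transport terms cancel exactly,
    whatever the value of [ρ_r]. *)
Lemma radial_equation r t : 0 <= t < tstar ->
  radial_t r t - (1 + gam) * rpow (radial r t) gam * (r * radial_r r t)
  = dd * rpow (radial r t) (1 + gam).
Proof.
  intros Ht. set (u := psi r t). assert (Hr : r = Phi u t) by (symmetry; apply psi_spec; auto).
  unfold radial_t, radial. fold u. rewrite Hr at 2. unfold Phi, Ech, EchT, PhiT.
  assert (HA : 0 < A u t) by (apply A_pos; auto).
  set (a := A u t) in *. set (X := Rpower a (- (1 / gam))). set (rr := radial_r r t).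
  destruct (Req_dec (G u) 0) as [Z|Z].
  - unfold Gg. rewrite Z, !Rmult_0_l, !(rpow_nonpos 0) by lra. ring.
  - assert (Hp : 0 < G u) by (generalize (G_nonneg u); lra).
    assert (HX : 0 < X) by apply Rpower_pos.
    rewrite !rpow_pos by (apply Rmult_lt_0_compat; auto).
    rewrite <- !Rpower_mult_distr by auto. unfold X. rewrite !Rpower_mult.
    replace (- (1 / gam) * gam) with (- (1)) by (field; lra).
    replace (- (1 / gam) * (1 + gam)) with (- (1 / gam) - 1) by (field; lra).
    rewrite Rpower_Ropp, Rpower_1, (Rpower_plus 1 gam (G u)), Rpower_1, !Rpower_minus1 by auto.
    unfold Gg. rewrite rpow_pos by auto. unfold expo. field. split; lra.
Qed.

(** ** Blow-up at the origin at time [tstar] *)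

Lemma psi_nonneg r t : 0 <= t < tstar -> 0 <= r -> 0 <= psi r t.
Proof.
  intros Ht Hr. destruct (Rle_lt_dec 0 (psi r t)) as [|Hn]; auto. exfalso.
  generalize (Phi_slopes t Ht _ _ Hn) (mslope_pos t). rewrite psi_spec by auto.
  unfold Phi at 1. nra.
Qed.

Lemma compressed_G_large u t : 0 <= t < tstar -> A u t <= 1 / 2 -> Mf * Rpower 2 (- (1 / gam)) <= G u.
Proof.
  intros Ht HA. assert (HGg : Mg / 2 <= Gg u).
  { generalize tstar_Mg gd_pos (Gg_bounds u) Mg_pos; intros. unfold A in HA.
    assert (gam * dd * Gg u * t <= gam * dd * Gg u * tstar).
    { apply Rmult_le_compat_l; [|lra]. apply Rmult_le_pos; lra. }
    assert (1 / 2 <= gam * dd * Gg u * tstar) by lra.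
    assert (Hle : Mg * (1 / 2) <= Mg * (gam * dd * Gg u * tstar)) by (apply Rmult_le_compat_l; lra).
    replace (Mg * (gam * dd * Gg u * tstar)) with (gam * dd * Mg * tstar * Gg u) in Hle by ring.
    rewrite tstar_Mg in Hle. lra. }
  destruct (Rle_lt_dec (Mf * Rpower 2 (- (1 / gam))) (G u)) as [|Hlt]; auto. exfalso.
  assert (Gg u < Mg / 2); [|lra].
  assert (Hm0 : 0 < Mf * Rpower 2 (- (1 / gam))) by (apply Rmult_lt_0_compat; auto; apply Rpower_pos).
  unfold Gg. destruct (Req_dec (G u) 0) as [Z|Z].
  - rewrite Z, rpow_nonpos by lra. generalize Mg_pos; lra.
  - rewrite rpow_pos by (generalize (G_nonneg u); lra).
    apply Rlt_le_trans with (Rpower (Mf * Rpower 2 (- (1 / gam))) gam).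
    + apply Rlt_Rpower_l; auto. generalize (G_nonneg u); lra.
    + rewrite Mg_eq, <- Rpower_mult_distr, Rpower_mult by (auto; apply Rpower_pos).
      replace (- (1 / gam) * gam) with (- (1)) by (field; lra).
      rewrite Rpower_Ropp, Rpower_1 by lra. lra.
Qed.

Lemma Ech_large K : exists alpha, 0 < alpha <= 1 / 2 /\
  forall u t, 0 <= t < tstar -> A u t <= alpha -> K < Ech u t.
Proof.
  set (m0 := Mf * Rpower 2 (- (1 / gam))). set (K' := Rabs K + 1).
  assert (Hm0 : 0 < m0) by (apply Rmult_lt_0_compat; auto; apply Rpower_pos).
  assert (HK' : 0 < K') by (unfold K'; generalize (Rabs_pos K); lra).
  exists (Rmin (1 / 2) (Rpower (m0 / K') gam)).
  split; [split; [apply Rmin_pos; [lra| apply Rpower_pos]| apply Rmin_l]|].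
  intros u t Ht HA. generalize (Rmin_l (1 / 2) (Rpower (m0 / K') gam))
    (Rmin_r (1 / 2) (Rpower (m0 / K') gam)); intros.
  assert (HG : m0 <= G u) by (apply (compressed_G_large u t); auto; lra).
  assert (HX : K' / m0 <= Rpower (A u t) (- (1 / gam))).
  { replace (K' / m0) with (Rpower (Rpower (m0 / K') gam) (- (1 / gam))).
    - apply Rpower_nonincr; [split; [apply A_pos; auto| lra]|].
      assert (0 < 1 / gam) by (apply Rdiv_lt_0_compat; lra). lra.
    - rewrite Rpower_mult. replace (gam * - (1 / gam)) with (- (1)) by (field; lra).
      rewrite Rpower_Ropp, Rpower_1 by (apply Rdiv_lt_0_compat; auto). field; lra. }
  unfold Ech. assert (m0 * (K' / m0) <= G u * Rpower (A u t) (- (1 / gam))).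
  { apply Rmult_le_compat; try lra. left; apply Rdiv_lt_0_compat; lra. }
  replace (m0 * (K' / m0)) with K' in * by (field; lra).
  unfold K' in *. generalize (Rle_abs K); lra.
Qed.

(** Characteristics reaching a neighbourhood of [(0, tstar)] are compressed by
    an arbitrarily small factor: either they start near the origin, where
    [G^γ ≈ Mg], or their compression factor is already small. *)
Lemma foot_compressed alpha : 0 < alpha <= 1 / 2 -> exists del, 0 < del /\
  forall r t, 0 <= r < del -> 0 <= t < tstar -> tstar - t < del -> A (psi r t) t <= alpha.
Proof.
  intros Hal. generalize tstar_pos tstar_Mg Mg_pos gd_pos; intros HT HTM HM Hgd.
  assert (HGg0 : Gg 0 = Mg) by (unfold Gg, Mg; rewrite G_origin; auto).
  destruct (continuity_pt_eps Gg 0 (alpha * Mg / 2) (Gg_cont 0) ltac:(nra)) as [eta [Heta Keta]].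
  set (Pa := Rpower alpha expo). assert (HPa : 0 < Pa) by apply Rpower_pos.
  exists (Rmin (alpha * tstar / 2) (eta * Pa)). split; [apply Rmin_pos; nra|].
  intros r t Hr Ht Htt. generalize (Rmin_l (alpha * tstar / 2) (eta * Pa))
    (Rmin_r (alpha * tstar / 2) (eta * Pa)); intros.
  set (u := psi r t). assert (Hu0 : 0 <= u) by (apply psi_nonneg; lra).
  destruct (Rlt_le_dec u eta) as [Hue|Hue].
  - specialize (Keta u ltac:(rewrite Rminus_0_r, Rabs_pos_eq; lra)). rewrite HGg0 in Keta.
    apply Rabs_def2 in Keta. unfold A.
    assert (Hprod : (Mg - alpha * Mg / 2) * (tstar - alpha * tstar / 2) <= Gg u * t).
    { apply Rmult_le_compat; nra. }
    assert (Hsq : gam * dd * ((Mg - alpha * Mg / 2) * (tstar - alpha * tstar / 2))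
                  = (1 - alpha / 2) * (1 - alpha / 2)).
    { transitivity ((gam * dd * Mg * tstar) * ((1 - alpha / 2) * (1 - alpha / 2))); [field|].
      rewrite HTM. ring. }
    assert (gam * dd * ((Mg - alpha * Mg / 2) * (tstar - alpha * tstar / 2)) <= gam * dd * (Gg u * t))
      by (apply Rmult_le_compat_l; lra).
    nra.
  - destruct (Rle_lt_dec (A u t) alpha) as [|Hlt]; auto. exfalso.
    assert (Pa < Rpower (A u t) expo) by (apply Rlt_Rpower_l; [apply expo_pos| lra]).
    assert (Hr' : r = u * Rpower (A u t) expo) by (symmetry; apply psi_spec; auto).
    assert (eta * Pa <= u * Rpower (A u t) expo) by (apply Rmult_le_compat; lra).
    lra.
Qed.

Lemma radial_blowup K : exists del, 0 < del /\
  forall r t, 0 <= r < del -> 0 <= t < tstar -> tstar - t < del -> K < radial r t.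
Proof.
  destruct (Ech_large K) as [alpha [Hal Hlarge]].
  destruct (foot_compressed alpha Hal) as [del [Hdel Hfoot]].
  exists del; split; auto. intros r t Hr Ht Htt. apply Hlarge; auto.
Qed.

(** ** Lifting to R^d: [ρ(x,t) = radial(|x|,t)]

    Spatial partial derivatives are [radial_r(|x|,t) x_i/|x|] (and 0 at the
    origin, where [radial_r(0,t) = 0]). *)
Variable d : nat.

Definition rho x t := radial (normd d x) t.
Definition rho_t x t := radial_t (normd d x) t.
Definition rho_x i x t :=
  if Rlt_dec 0 (normd d x) then radial_r (normd d x) t * x i / normd d x else 0.

Lemma radial_r_origin t : 0 <= t < tstar -> radial_r 0 t = 0.
Proof.
  intros Ht. assert (H0 : Phi 0 t = 0) by (unfold Phi; ring).
  assert (Hpsi : psi 0 t = 0) by (rewrite <- H0 at 1; apply psi_Phi; auto).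
  unfold radial_r, EchU. rewrite Hpsi, G'_origin. unfold Rdiv. ring.
Qed.

Lemma norm_cont T x t : cont_within (distd d) T (fun y _ => normd d y) x t.
Proof. intros e He. exists e; split; auto. intros y s _ Hy _. eapply Rle_lt_trans; [apply normd_lip| auto]. Qed.

Lemma coord_cont T x t i : (i < d)%nat -> cont_within (distd d) T (fun y _ => y i) x t.
Proof.
  intros Hi e He. exists e; split; auto. intros y s _ Hy _.
  eapply Rle_lt_trans; [apply (coord_le d (vsub y x) i Hi)| auto].
Qed.

Lemma radial_fun_cont F x t : cont_within Rdist tstar F (normd d x) t ->
  cont_within (distd d) tstar (fun y s => F (normd d y) s) x t.
Proof. intro. apply (cont_within_subst (distd d) tstar (fun y _ => normd d y) F); auto using norm_cont. Qed.

Lemma rho_x_cont i x t : (i < d)%nat -> 0 <= t < tstar -> cont_within (distd d) tstar (rho_x i) x t.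
Proof.
  intros Hi Ht. destruct (Rlt_dec 0 (normd d x)) as [Hx|Hx].
  - apply (cont_within_local _ _ _ (fun y s => radial_r (normd d y) s * y i * / normd d y));
      [apply distd_self| |].
    + exists (normd d x / 2); split; [lra|]. intros y s Hy. unfold rho_x.
      generalize (normd_lip d x y); intro HL. assert (Rabs (normd d y - normd d x) < normd d x / 2) by lra.
      destruct (Rlt_dec 0 (normd d y)); [reflexivity|]. apply Rabs_def2 in H. lra.
    + apply cont_within_mult; [apply cont_within_mult|].
      * apply radial_fun_cont, radial_r_cont; auto.
      * apply coord_cont; auto.
      * apply (cont_within_comp _ _ Rinv (fun y _ => normd d y)); [|apply norm_cont].
        apply continuity_pt_inv; [reg| lra].
  - assert (Hx0 : normd d x = 0) by (generalize (normd_nonneg d x); lra).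
    apply (cont_within_dominated _ _ _ (fun y s => radial_r (normd d y) s) x t 1).
    + unfold rho_x. destruct (Rlt_dec 0 (normd d x)); [lra| auto].
    + rewrite Hx0. apply radial_r_origin; auto.
    + apply radial_fun_cont, radial_r_cont; auto.
    + exists 1; split; [lra|]. intros y s _ _ _. unfold rho_x.
      destruct (Rlt_dec 0 (normd d y)) as [Hy|Hy]; [|rewrite Rabs_R0; generalize (Rabs_pos (radial_r (normd d y) s)); lra].
      unfold Rdiv. rewrite !Rabs_mult, Rabs_inv, (Rabs_pos_eq (normd d y)) by lra.
      rewrite Rmult_1_l, Rmult_assoc. rewrite <- (Rmult_1_r (Rabs (radial_r _ _))) at 2.
      apply Rmult_le_compat_l; [apply Rabs_pos|].
      apply Rmult_le_reg_r with (normd d y); auto. rewrite Rmult_assoc, Rinv_l, Rmult_1_l, Rmult_1_r by lra.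
      apply coord_le; auto.
Qed.

Lemma rho_x_deriv i x t : (i < d)%nat -> 0 <= t < tstar ->
  derivable_pt_lim (fun h => rho (upd x i h) t) 0 (rho_x i x t).
Proof.
  intros Hi Ht. unfold rho_x. destruct (Rlt_dec 0 (normd d x)) as [Hx|Hx].
  - set (N := dot d x x). assert (HN : 0 < N) by (unfold N; rewrite <- normd_sq; nra).
    apply (derivable_pt_lim_ext (comp (fun y => radial y t) (fun h => sqrt (N + 2 * x i * h + h * h)))).
    { intro h. unfold comp, rho, normd. rewrite dot_upd by auto. fold N. do 3 f_equal. ring. }
    assert (Hq : derivable_pt_lim (fun h => N + 2 * x i * h + h * h) 0 (2 * x i)).
    { intros e He. exists (mkposreal e He). intros h Hh0 Hh. simpl in Hh.
      replace ((N + 2 * x i * (0 + h) + (0 + h) * (0 + h) - (N + 2 * x i * 0 + 0 * 0)) / h - 2 * x i)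
        with h by (field; auto). auto. }
    replace (radial_r (normd d x) t * x i / normd d x)
      with (radial_r (sqrt (N + 2 * x i * 0 + 0 * 0)) t * (/ (2 * sqrt (N + 2 * x i * 0 + 0 * 0)) * (2 * x i))).
    + apply (derivable_pt_lim_comp (fun h => sqrt (N + 2 * x i * h + h * h)) (fun y => radial y t));
        [|apply radial_deriv_r; auto].
      apply (derivable_pt_lim_comp (fun h => N + 2 * x i * h + h * h) sqrt); [auto|].
      apply derivable_pt_lim_sqrt; lra.
    + replace (N + 2 * x i * 0 + 0 * 0) with N by ring. replace (sqrt N) with (normd d x) by reflexivity.
      field. lra.
  - assert (Hx0 : normd d x = 0) by (generalize (normd_nonneg d x); lra).
    apply (derivable_pt_lim_ext (fun h => radial (Rabs h) t)).
    { intro h. unfold rho. rewrite normd_upd_origin; auto. }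
    apply (derive_abs_flat (fun y => radial y t)).
    generalize (radial_deriv_r 0 t Ht). rewrite radial_r_origin by auto. auto.
Qed.

Lemma sum_rho_x x t : sumR d (fun i => x i * rho_x i x t) = normd d x * radial_r (normd d x) t.
Proof.
  unfold rho_x. destruct (Rlt_dec 0 (normd d x)) as [Hx|Hx].
  - rewrite (sumR_ext d _ (fun i => (radial_r (normd d x) t / normd d x) * (x i * x i))) by (intros; field; lra).
    rewrite sumR_scal. fold (dot d x x). rewrite <- normd_sq. field. lra.
  - assert (Hx0 : normd d x = 0) by (generalize (normd_nonneg d x); lra). rewrite Hx0, sumR_zero; [ring|].
    intros; ring.
Qed.

Theorem radial_solution (f : vec -> R) : (forall x, f x = G (normd d x)) ->
  exists (rho rho_t : vec -> R -> R) (rho_x : nat -> vec -> R -> R),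
    C1_strip d tstar rho rho_t rho_x /\
    (forall x, rho x 0 = f x) /\
    (forall x t, 0 < t < tstar ->
       rho_t x t - (1 + gam) * rpow (rho x t) gam * sumR d (fun i => x i * rho_x i x t)
       = dd * rpow (rho x t) (1 + gam)) /\
    (forall x0 t, 0 <= t < tstar ->
       let a := 1 - gam * dd * rpow (f x0) gam * t in
       rho (vscal (Rpower a ((1 + gam) / (gam * dd))) x0) t = f x0 * Rpower a (- (1 / gam))) /\
    (forall K, exists delta, 0 < delta /\
       forall x t, 0 <= t < tstar -> normd d x < delta -> Rabs (t - tstar) < delta -> K < rho x t).
Proof.
  intros Hf. exists rho, rho_t, rho_x. split; [|split; [|split; [|split]]].
  - split; [|split].
    + intros x t Ht. split; [|split].
      * apply radial_fun_cont, radial_cont; auto.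
      * apply radial_fun_cont, radial_t_cont; auto.
      * intros. apply rho_x_cont; auto.
    + intros x t Ht. apply radial_deriv_t; auto.
    + intros x t i Ht Hi. apply rho_x_deriv; auto.
  - intros x. rewrite Hf. apply radial_initial.
  - intros x t Ht. unfold rho, rho_t. rewrite sum_rho_x. apply radial_equation. lra.
  - intros x0 t Ht. rewrite Hf. unfold rho. rewrite normd_vscal by (left; apply Rpower_pos).
    rewrite Rmult_comm. apply radial_Phi; auto.
  - intros K. destruct (radial_blowup K) as [del [Hd Kb]]. exists del; split; auto.
    intros x t Ht Hx Htt. apply Kb; auto. split; auto. apply normd_nonneg.
    apply Rabs_def2 in Htt. lra.
Qed.
End RadialProblem.

(** * The profile of the datum along the first axis *)
Definition axis (r : R) : vec := upd (fun _ => 0) 0 r.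

Lemma normd_axis d r : (0 < d)%nat -> normd d (axis r) = Rabs r.
Proof.
  intro Hd. apply normd_upd_origin; auto.
  unfold normd, dot. rewrite sumR_zero; [apply sqrt_0| intros; ring].
Qed.

Lemma upd_axis u h : upd (axis u) 0 h = axis (u + h).
Proof.
  apply functional_extensionality. intro j. unfold axis, upd.
  destruct (Nat.eqb j 0); ring.
Qed.

Lemma vsub_axis y u : vsub (axis y) (axis u) = axis (y - u).
Proof.
  apply functional_extensionality. intro j. unfold axis, upd, vsub.
  destruct (Nat.eqb j 0); ring.
Qed.

(** A radial, radially non-increasing C^1 datum with maximum [Mf] is
    [G(|x|)] for an even C^1 profile [G] non-increasing on [[0,∞)] with
    [G 0 = Mf]; [G] is the restriction of the datum to the first axis. *)
Lemma profile_of_datum d fI Mf : (1 <= d)%nat -> C1_Rd d fI -> (forall x, 0 <= fI x) ->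
  (exists g : R -> R, (forall x, fI x = g (normd d x)) /\ (forall r s, 0 <= r <= s -> g s <= g r)) ->
  (forall x, fI x <= Mf) -> (exists x, fI x = Mf) ->
  exists G G' : R -> R, (forall x, fI x = G (normd d x)) /\
    (forall u, derivable_pt_lim G u (G' u)) /\ (forall u, continuity_pt G' u) /\
    (forall u, 0 <= G u) /\ G 0 = Mf /\ (forall u, G u = G (Rabs u)) /\
    (forall u v, 0 <= u <= v -> G v <= G u).
Proof.
  intros Hd [DF [_ Hder]] Hnn [g [Hg Hgmono]] HMf [xm Hxm].
  assert (Hd0 : (0 < d)%nat) by lia.
  assert (HGg : forall r, fI (axis r) = g (Rabs r)) by (intro r; rewrite Hg, normd_axis; auto).
  exists (fun r => fI (axis r)), (fun r => DF 0%nat (axis r)). split; [|split; [|split; [|split; [|split; [|split]]]]].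
  - intro x. rewrite HGg, Rabs_pos_eq by apply normd_nonneg. auto.
  - intro u. destruct (Hder 0%nat Hd0 (axis u)) as [D _]. intros e He.
    destruct (D e He) as [del K]. exists del. intros h Hh0 Hh. specialize (K h Hh0 Hh).
    rewrite !upd_axis, Rplus_0_l, Rplus_0_r in K. auto.
  - intro u. apply continuity_pt_of_eps. intros e He.
    destruct (Hder 0%nat Hd0 (axis u)) as [_ C]. destruct (C e He) as [del [Hdel K]].
    exists del; split; auto. intros y Hy. apply K.
    rewrite vsub_axis, normd_axis; auto.
  - auto.
  - apply Rle_antisym; [apply HMf|]. rewrite <- Hxm, HGg, Rabs_R0, Hg.
    apply Hgmono. split; [lra| apply normd_nonneg].
  - intro u. rewrite !HGg, Rabs_Rabsolu. auto.
  - intros u v Huv. rewrite !HGg, !Rabs_pos_eq by lra. apply Hgmono; auto.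
Qed.

Theorem mainTheorem1 (d : nat) (gamma : R) (fI : vec -> R) (Mf : R) :
  (1 <= d)%nat -> 0 < gamma ->
  (* f_I in C^1(R^d) cap L^infty(R^d) *)
  C1_Rd d fI ->
  (exists B, forall x, Rabs (fI x) <= B) ->
  (* nonnegative, not identically zero *)
  (forall x, 0 <= fI x) ->
  (exists x, fI x <> 0) ->
  (* radially symmetric and radially non-increasing *)
  (exists g : R -> R, (forall x, fI x = g (normd d x)) /\
     (forall r s, 0 <= r <= s -> g s <= g r)) ->
  (* Mf = max f_I *)
  (forall x, fI x <= Mf) -> (exists x, fI x = Mf) ->
  let tstar := / (gamma * INR d * rpow Mf gamma) in
  exists (rho rho_t : vec -> R -> R) (rho_x : nat -> vec -> R -> R),
    C1_strip d tstar rho rho_t rho_x /\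
    (forall x, rho x 0 = fI x) /\
    (forall x t, 0 < t < tstar ->
       rho_t x t - (1 + gamma) * rpow (rho x t) gamma
                     * sumR d (fun i => x i * rho_x i x t)
       = INR d * rpow (rho x t) (1 + gamma)) /\
    (forall x0 t, 0 <= t < tstar ->
       let a := 1 - gamma * INR d * rpow (fI x0) gamma * t in
       rho (vscal (Rpower a ((1 + gamma) / (gamma * INR d))) x0) t
       = fI x0 * Rpower a (- (1 / gamma))) /\
    (forall K, exists delta, 0 < delta /\
       forall x t, 0 <= t < tstar -> normd d x < delta -> Rabs (t - tstar) < delta ->
         K < rho x t).
Proof.
  intros Hd Hgam HC1 _ Hnn [x1 Hx1] Hrad HMf Hmax tstar.
  assert (HMpos : 0 < Mf).
  { destruct (Hnn x1) as [Hpos|Hzero]; [generalize (HMf x1); lra| congruence]. }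
  assert (HdR : 0 < INR d) by (apply lt_0_INR; lia).
  destruct (profile_of_datum d fI Mf Hd HC1 Hnn Hrad HMf Hmax)
    as (G & G' & HfG & HGd & HG'c & HGnn & HG0 & HGeven & HGmono).
  exact (radial_solution gamma (INR d) Mf G G' Hgam HdR HMpos HGd HG'c HGnn HG0 HGeven HGmono d fI HfG).
Qed.
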